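(* Let $P$ be a convex polygon. (1) Every locally maximal parallelogram in $P$ is inscribed. (2) For any inscribed slidable parallelogram in $P$, there is an inscribed non-slidable parallelogram in $P$ with the same area.
   Context: $P$ is regarded as a compact set (boundary $\partial P$ plus interior); its edges are regarded as open segments (not containing their endpoints). A parallelogram lies in $P$ if all four corners lie in $P$. A parallelogram $A_0A_1A_2A_3$ lying in $P$ is locally maximal if there exists $\delta>0$ such that every parallelogram $B_0B_1B_2B_3$ lying in $P$ with $|A_iB_i|<\delta$ for all $i$ has area at most that of $A_0A_1A_2A_3$. A parallelogram is inscribed if all its corners lie on $\partial P$. It is slidable if two of its corners lie in the same (open) edge of $P$ (a corner in the interior of an edge and a corner at an endpoint of that edge do not count as lying in the same edge), and non-slidable otherwise. *)

From Stdlib Require Import Reals Lra Arith.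
Open Scope R_scope.

Definition point := (R * R)%type.

Definition psub (p q : point) : point := (fst p - fst q, snd p - snd q).
Definition padd (p q : point) : point := (fst p + fst q, snd p + snd q).
Definition pscale (t : R) (p : point) : point := (t * fst p, t * snd p).
Definition cross (a b : point) : R := fst a * snd b - snd a * fst b.
Definition dist2 (p q : point) : R :=
  sqrt ((fst p - fst q) ^ 2 + (snd p - snd q) ^ 2).

(* A polygon with n vertices v 0, ..., v (n-1), indices taken modulo n. *)
Definition nxt (n i : nat) : nat := (S i mod n)%nat.

(* Convex polygon: n >= 3 vertices listed counterclockwise, and for every
   edge [v i, v (i+1)] all other vertices lie strictly to its left
   (strict convexity: no three vertices collinear, no straight angles). *)
Definition convex_polygon (n : nat) (v : nat -> point) : Prop :=
  (3 <= n)%nat /\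
  forall i j, (i < n)%nat -> (j < n)%nat -> j <> i -> j <> nxt n i ->
    0 < cross (psub (v (nxt n i)) (v i)) (psub (v j) (v i)).

(* P as a compact set: boundary plus interior (intersection of the closed
   left half-planes of its edges = convex hull of the vertices). *)
Definition inP (n : nat) (v : nat -> point) (x : point) : Prop :=
  forall i, (i < n)%nat -> 0 <= cross (psub (v (nxt n i)) (v i)) (psub x (v i)).

Definition in_edge (n : nat) (v : nat -> point) (i : nat) (x : point) : Prop :=
  exists t, 0 < t < 1 /\ x = padd (v i) (pscale t (psub (v (nxt n i)) (v i))).

Definition on_boundary (n : nat) (v : nat -> point) (x : point) : Prop :=
  (exists i, (i < n)%nat /\ x = v i) \/ (exists i, (i < n)%nat /\ in_edge n v i x).

(* A parallelogram A 0 A 1 A 2 A 3 (corners A 0 .. A 3 in cyclic order). *)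
Definition par_area (A : nat -> point) : R :=
  Rabs (cross (psub (A 1%nat) (A 0%nat)) (psub (A 3%nat) (A 0%nat))).

Definition parallelogram (A : nat -> point) : Prop :=
  padd (A 0%nat) (A 2%nat) = padd (A 1%nat) (A 3%nat) /\ 0 < par_area A.

Definition lies_in (n : nat) (v : nat -> point) (A : nat -> point) : Prop :=
  forall k, (k < 4)%nat -> inP n v (A k).

Definition locally_maximal (n : nat) (v : nat -> point) (A : nat -> point) : Prop :=
  parallelogram A /\ lies_in n v A /\
  exists delta, 0 < delta /\
    forall B, parallelogram B -> lies_in n v B ->
      (forall k, (k < 4)%nat -> dist2 (A k) (B k) < delta) ->
      par_area B <= par_area A.

Definition inscribed (n : nat) (v : nat -> point) (A : nat -> point) : Prop :=
  forall k, (k < 4)%nat -> on_boundary n v (A k).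

Definition slidable (n : nat) (v : nat -> point) (A : nat -> point) : Prop :=
  exists i j k, (i < n)%nat /\ (j < 4)%nat /\ (k < 4)%nat /\ j <> k /\
    in_edge n v i (A j) /\ in_edge n v i (A k).

(* Each edge i of P gives an affine function [side i], and P is where all of them are
   nonnegative.
   (1) If a corner, say A0, of A is interior, choose p = A0 + e (A0 - A3) in P and translate
   A0 and A1 by t (p - A1): for small t, A1 stays on the segment [A1, p], A0 stays inside P,
   and the area is multiplied by 1 + t e.
   (2) Two corners of A in a common open edge are adjacent: otherwise the other diagonal,
   which has the same midpoint on the edge line and both ends in P, would lie on that line
   too.  Translating this side of A along the edge preserves the area, so it can be slid
   until one of its corners reaches a vertex; if the opposite side also lies in an edge,
   slide it too.  The result is non-slidable: a vertex lies in no open edge, and the other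
   two corners are off the line of the edge carrying the first side. *)

From Stdlib Require Import Reals Lra Lia Classical.
Open Scope R_scope.

Lemma point_eq (x y : point) : fst x = fst y -> snd x = snd y -> x = y.
Proof. destruct x, y; simpl; intros -> ->; reflexivity. Qed.

Lemma collinear_scale (a b : point) :
  a <> (0, 0) -> cross a b = 0 -> exists t, b = pscale t a.
Proof.
  destruct a as [a1 a2], b as [b1 b2]; unfold cross, pscale; simpl; intros Ha Hc.
  assert (Hn : a1 * a1 + a2 * a2 <> 0).
  { intro Z. apply Ha. f_equal; nra. }
  exists ((a1 * b1 + a2 * b2) / (a1 * a1 + a2 * a2)).
  assert (a1 * (a1 * b2 - a2 * b1) = 0 /\ a2 * (a1 * b2 - a2 * b1) = 0)
    as [H1 H2] by (rewrite Hc; split; ring).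
  apply point_eq; simpl; field_simplify_eq; auto; nra.
Qed.

Lemma cross_collinear (a b c : point) :
  a <> (0, 0) -> cross a b = 0 -> cross a c = 0 -> cross b c = 0.
Proof.
  intros Ha Hb Hc.
  destruct (collinear_scale a b Ha Hb) as [s ->].
  destruct (collinear_scale a c Ha Hc) as [t ->].
  unfold cross, pscale; simpl; ring.
Qed.

Lemma dist2_self (x : point) : dist2 x x = 0.
Proof.
  unfold dist2. replace ((fst x - fst x) ^ 2 + (snd x - snd x) ^ 2) with 0 by ring.
  apply sqrt_0.
Qed.

Lemma dist2_padd_scale (x q : point) (t : R) :
  0 <= t -> dist2 x (padd x (pscale t q)) = t * dist2 (0, 0) q.
Proof.
  intros Ht. unfold dist2, padd, pscale; cbn [fst snd].
  replace ((fst x - (fst x + t * fst q)) ^ 2 + (snd x - (snd x + t * snd q)) ^ 2)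
    with (t ^ 2 * ((0 - fst q) ^ 2 + (0 - snd q) ^ 2)) by ring.
  rewrite sqrt_mult_alt, sqrt_pow2 by nra. reflexivity.
Qed.

Lemma exists_small_pos (t0 N delta : R) :
  0 < t0 -> 0 <= N -> 0 < delta -> exists t, 0 < t <= t0 /\ t * N < delta.
Proof.
  intros Ht0 HN Hd.
  set (u := delta / (N + 1)).
  assert (Hu : u * (N + 1) = delta) by (unfold u; field; lra).
  assert (0 < u) by (unfold u; apply Rdiv_lt_0_compat; lra).
  exists (Rmin t0 u). pose proof (Rmin_l t0 u). pose proof (Rmin_r t0 u).
  split; [split; [apply Rmin_pos|]; lra | nra].
Qed.

Lemma finite_pos_perturbation (m : nat) (a b : nat -> R) :
  (forall i, (i < m)%nat -> 0 < a i) ->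
  exists t0, 0 < t0 /\ forall i t, (i < m)%nat -> 0 <= t <= t0 -> 0 < a i + t * b i.
Proof.
  induction m as [|m IH]; intros Ha.
  - exists 1. split; [lra | intros; lia].
  - destruct IH as [t0 [Ht0 H]]; [intros; apply Ha; lia|].
    assert (Ham : 0 < a m) by (apply Ha; lia).
    destruct (Rle_dec 0 (b m)) as [Hb|Hb].
    + exists t0. split; [assumption|]. intros i t Hi Ht.
      destruct (Nat.eq_dec i m) as [->|]; [nra | apply H; [lia | assumption]].
    + exists (Rmin t0 (a m / (- b m) / 2)).
      assert (0 < a m / (- b m) / 2) by (apply Rdiv_lt_0_compat; [apply Rdiv_lt_0_compat|]; lra).
      assert (Hmb : a m / (- b m) / 2 * b m = - a m / 2) by (field; lra).
      split; [apply Rmin_pos; assumption|].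
      intros i t Hi Ht. pose proof (Rmin_l t0 (a m / (- b m) / 2)).
      pose proof (Rmin_r t0 (a m / (- b m) / 2)).
      destruct (Nat.eq_dec i m) as [->|]; [nra | apply H; [lia | lra]].
Qed.

Lemma nxt_spec (n i : nat) :
  (i < n)%nat -> nxt n i = if Nat.eqb (S i) n then 0%nat else S i.
Proof.
  intros Hi. unfold nxt. destruct (Nat.eqb_spec (S i) n) as [<-|].
  - apply Nat.Div0.mod_same.
  - apply Nat.mod_small. lia.
Qed.

Lemma nxt_lt (n i : nat) : (i < n)%nat -> (nxt n i < n)%nat.
Proof. intros Hi. rewrite nxt_spec by lia. destruct (Nat.eqb_spec (S i) n); lia. Qed.

Lemma nxt_neq (n i : nat) : (2 <= n)%nat -> (i < n)%nat -> nxt n i <> i.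
Proof. intros Hn Hi. rewrite nxt_spec by lia. destruct (Nat.eqb_spec (S i) n); lia. Qed.

Lemma nxt_nxt_neq (n i : nat) : (3 <= n)%nat -> (i < n)%nat -> nxt n (nxt n i) <> i.
Proof.
  intros Hn Hi. rewrite (nxt_spec n (nxt n i)) by (apply nxt_lt; lia).
  rewrite nxt_spec by lia.
  destruct (Nat.eqb_spec (S i) n);
    [destruct (Nat.eqb_spec 1 n) | destruct (Nat.eqb_spec (S (S i)) n)]; lia.
Qed.

Lemma nxt_surj (n i : nat) : (i < n)%nat -> exists j, (j < n)%nat /\ nxt n j = i.
Proof.
  intros Hi. destruct i as [|i].
  - exists (n - 1)%nat. rewrite nxt_spec by lia. destruct (Nat.eqb_spec (S (n - 1)) n); lia.
  - exists i. rewrite nxt_spec by lia. destruct (Nat.eqb_spec (S i) n); lia.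
Qed.

Lemma fourth_corner (A : nat -> point) :
  padd (A 0%nat) (A 2%nat) = padd (A 1%nat) (A 3%nat) ->
  A 2%nat = psub (padd (A 1%nat) (A 3%nat)) (A 0%nat).
Proof.
  intros H. apply (f_equal fst) in H as H1. apply (f_equal snd) in H as H2.
  unfold padd, psub in *; simpl in *. apply point_eq; simpl; lra.
Qed.

Definition rot (A : nat -> point) : nat -> point :=
  fun k => match k with
           | 0%nat => A 1%nat | 1%nat => A 2%nat | 2%nat => A 3%nat | _ => A 0%nat
           end.

Definition rotn (r : nat) (A : nat -> point) : nat -> point := Nat.iter r rot A.

Lemma rotn_corner0 r A : (r < 4)%nat -> rotn r A 0%nat = A r.
Proof. intros Hr. destruct r as [|[|[|[|r]]]]; reflexivity || lia. Qed.

Lemma par_area_rot A :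
  padd (A 0%nat) (A 2%nat) = padd (A 1%nat) (A 3%nat) -> par_area (rot A) = par_area A.
Proof.
  intros H. unfold par_area; simpl. rewrite (fourth_corner A H). f_equal.
  unfold cross, psub, padd; simpl. ring.
Qed.

Lemma parallelogram_rot A : parallelogram A -> parallelogram (rot A).
Proof.
  intros [H Ha]. split; [|rewrite par_area_rot; assumption].
  simpl. rewrite (fourth_corner A H). apply point_eq; unfold padd, psub; simpl; ring.
Qed.

Lemma parallelogram_rotn r A : parallelogram A -> parallelogram (rotn r A).
Proof. intros H. induction r as [|r IH]; [exact H | apply parallelogram_rot, IH]. Qed.

Lemma par_area_rotn r A : parallelogram A -> par_area (rotn r A) = par_area A.
Proof.
  intros H. induction r as [|r IH]; [reflexivity|].
  simpl. rewrite par_area_rot; [exact IH | apply (parallelogram_rotn r A H)].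
Qed.

Lemma corners_rotn (P : point -> Prop) r A :
  (forall k, (k < 4)%nat -> P (A k)) -> forall k, (k < 4)%nat -> P (rotn r A k).
Proof.
  intros H. induction r as [|r IH]; [exact H|].
  intros k Hk. destruct k as [|[|[|[|k]]]]; apply IH; lia.
Qed.

Definition shift01 (d : point) (A : nat -> point) : nat -> point :=
  fun k => match k with
           | 0%nat => padd (A 0%nat) d | 1%nat => padd (A 1%nat) d | _ => A k
           end.

Lemma shift01_sum d A :
  padd (A 0%nat) (A 2%nat) = padd (A 1%nat) (A 3%nat) ->
  padd (shift01 d A 0%nat) (shift01 d A 2%nat) = padd (shift01 d A 1%nat) (shift01 d A 3%nat).
Proof.
  intros H. simpl. rewrite (fourth_corner A H).
  apply point_eq; unfold padd, psub; simpl; ring.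
Qed.

Lemma shift01_cross d A :
  cross (psub (shift01 d A 1%nat) (shift01 d A 0%nat))
        (psub (shift01 d A 3%nat) (shift01 d A 0%nat))
  = cross (psub (A 1%nat) (A 0%nat)) (psub (A 3%nat) (A 0%nat))
    - cross (psub (A 1%nat) (A 0%nat)) d.
Proof. simpl. unfold cross, psub, padd; simpl. ring. Qed.

Section Polygon.

Variables (n : nat) (v : nat -> point).

Definition edge (i : nat) : point := psub (v (nxt n i)) (v i).

Definition side (i : nat) (x : point) : R := cross (edge i) (psub x (v i)).

Lemma side_segment i x y t :
  side i (padd x (pscale t (psub y x))) = (1 - t) * side i x + t * side i y.
Proof. unfold side, edge, cross, padd, pscale, psub; simpl. ring. Qed.

Lemma side_ray i x q t : side i (padd x (pscale t q)) = side i x + t * cross (edge i) q.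
Proof. unfold side, edge, cross, padd, pscale, psub; simpl. ring. Qed.

Lemma side_vertex i : side i (v i) = 0.
Proof. unfold side, cross, psub; simpl. ring. Qed.

Lemma side_vertex_nxt i : side i (v (nxt n i)) = 0.
Proof. unfold side, edge, cross, psub; simpl. ring. Qed.

Lemma side_in_edge i x : in_edge n v i x -> side i x = 0.
Proof. intros [t [_ ->]]. unfold side, edge, cross, padd, pscale, psub; simpl. ring. Qed.

Lemma inP_segment x y t :
  inP n v x -> inP n v y -> 0 <= t <= 1 -> inP n v (padd x (pscale t (psub y x))).
Proof.
  intros Hx Hy Ht i Hi. specialize (Hx i Hi). specialize (Hy i Hi).
  change (0 <= side i (padd x (pscale t (psub y x)))). rewrite side_segment.
  change (0 <= side i x) in Hx. change (0 <= side i y) in Hy. nra.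
Qed.

Hypothesis hP : convex_polygon n v.

Lemma side_vertex_pos i j :
  (i < n)%nat -> (j < n)%nat -> j <> i -> j <> nxt n i -> 0 < side i (v j).
Proof. apply (proj2 hP). Qed.

Lemma inP_vertex k : (k < n)%nat -> inP n v (v k).
Proof.
  intros Hk i Hi. change (0 <= side i (v k)).
  destruct (Nat.eq_dec k i) as [->|Hki]; [rewrite side_vertex; lra|].
  destruct (Nat.eq_dec k (nxt n i)) as [->|Hkn]; [rewrite side_vertex_nxt; lra|].
  left. apply side_vertex_pos; assumption.
Qed.

Lemma inP_in_edge i x : (i < n)%nat -> in_edge n v i x -> inP n v x.
Proof.
  intros Hi [t [Ht ->]].
  apply inP_segment; [apply inP_vertex .. | lra]; [assumption | apply nxt_lt, Hi].
Qed.

Lemma edge_neq0 i : (i < n)%nat -> edge i <> (0, 0).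
Proof.
  intros Hi E. destruct hP as [H3 _].
  assert (H := side_vertex_pos i (nxt n (nxt n i)) Hi (nxt_lt _ _ (nxt_lt _ _ Hi))
                 (nxt_nxt_neq n i H3 Hi) (nxt_neq n (nxt n i) ltac:(lia) (nxt_lt _ _ Hi))).
  unfold side in H. rewrite E in H. unfold cross in H; simpl in H. lra.
Qed.

Lemma vertex_not_in_edge i k : (i < n)%nat -> (k < n)%nat -> ~ in_edge n v i (v k).
Proof.
  intros Hi Hk He. assert (Hz := side_in_edge i _ He).
  destruct (Nat.eq_dec k i) as [->|Hki]; [|destruct (Nat.eq_dec k (nxt n i)) as [->|Hkn]].
  - destruct He as [t [Ht E]]. apply (edge_neq0 i Hi).
    apply point_eq; [apply (f_equal fst) in E | apply (f_equal snd) in E];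
      simpl in E; apply (Rmult_eq_reg_l t); simpl; lra.
  - destruct He as [t [Ht E]]. apply (edge_neq0 i Hi).
    apply point_eq; [apply (f_equal fst) in E | apply (f_equal snd) in E];
      unfold edge, psub in *; simpl in *; apply (Rmult_eq_reg_l (1 - t)); lra.
  - pose proof (side_vertex_pos i k Hi Hk Hki Hkn). lra.
Qed.

Lemma in_edge_unique i j x :
  (i < n)%nat -> (j < n)%nat -> in_edge n v i x -> in_edge n v j x -> i = j.
Proof.
  intros Hi Hj Hei [t [Ht ->]].
  destruct (Nat.eq_dec i j) as [|Hij]; [assumption|exfalso].
  destruct hP as [H3 _].
  apply side_in_edge in Hei. rewrite side_segment in Hei.
  assert (A1 := inP_vertex j Hj i Hi). assert (A2 := inP_vertex _ (nxt_lt _ _ Hj) i Hi).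
  change (0 <= side i (v j)) in A1. change (0 <= side i (v (nxt n j))) in A2.
  destruct (Nat.eq_dec j (nxt n i)) as [->|Hjn].
  - assert (0 < side i (v (nxt n (nxt n i)))).
    { apply side_vertex_pos; [assumption | apply nxt_lt, nxt_lt, Hi | |].
      - apply nxt_nxt_neq; assumption.
      - apply nxt_neq; [lia | apply nxt_lt, Hi]. }
    nra.
  - assert (0 < side i (v j)) by (apply side_vertex_pos; auto).
    nra.
Qed.

Lemma boundary_of_side_eq0 i x :
  (i < n)%nat -> inP n v x -> side i x = 0 -> on_boundary n v x.
Proof.
  intros Hi Hx Hs. destruct hP as [H3 _].
  destruct (collinear_scale (edge i) (psub x (v i)) (edge_neq0 i Hi) Hs) as [t Ht].
  assert (Ex : x = padd (v i) (pscale t (edge i))).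
  { apply (f_equal fst) in Ht as Ht1. apply (f_equal snd) in Ht as Ht2.
    unfold psub, pscale in *; simpl in *. apply point_eq; simpl; lra. }
  assert (Hi' := nxt_lt n i Hi).
  (* the neighbouring edges bound the parameter [t] to [0, 1] *)
  assert (T1 : t <= 1).
  { assert (0 < side (nxt n i) (v i)).
    { apply side_vertex_pos; [assumption..| |].
      - intro E. exact (nxt_neq n i ltac:(lia) Hi (eq_sym E)).
      - apply not_eq_sym, nxt_nxt_neq; assumption. }
    assert (Hx' := Hx _ Hi'). change (0 <= side (nxt n i) x) in Hx'.
    rewrite Ex in Hx'. unfold edge in Hx'. rewrite side_segment, side_vertex in Hx'. nra. }
  assert (T0 : 0 <= t).
  { destruct (nxt_surj n i Hi) as [j [Hj Hji]].
    assert (0 < side j (v (nxt n i))).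
    { apply side_vertex_pos; [assumption..| |].
      - intro E. rewrite <- E in Hji. exact (nxt_nxt_neq n i H3 Hi Hji).
      - rewrite Hji. apply nxt_neq; [lia | assumption]. }
    assert (Hxj := Hx _ Hj). change (0 <= side j x) in Hxj.
    rewrite Ex in Hxj. unfold edge in Hxj. rewrite side_segment in Hxj.
    assert (side j (v i) = 0) by (rewrite <- Hji; apply side_vertex_nxt). nra. }
  destruct (Req_dec t 0) as [->|Z]; [|destruct (Req_dec t 1) as [->|O]].
  - left. exists i. split; [assumption|].
    rewrite Ex. apply point_eq; unfold padd, pscale; simpl; ring.
  - left. exists (nxt n i). split; [assumption|].
    rewrite Ex. apply point_eq; unfold padd, pscale, edge, psub; simpl; ring.
  - right. exists i. split; [assumption|]. exists t. split; [lra | exact Ex].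
Qed.

Lemma side_pos_interior i x :
  (i < n)%nat -> inP n v x -> ~ on_boundary n v x -> 0 < side i x.
Proof.
  intros Hi Hx Hb. destruct (Rle_lt_or_eq_dec 0 (side i x) (Hx i Hi)) as [|E]; [assumption|].
  exfalso. apply Hb, (boundary_of_side_eq0 i); auto.
Qed.

Lemma inP_ray_interior x q :
  (forall i, (i < n)%nat -> 0 < side i x) ->
  exists t0, 0 < t0 /\ forall t, 0 <= t <= t0 -> inP n v (padd x (pscale t q)).
Proof.
  intros Hx.
  destruct (finite_pos_perturbation n (fun i => side i x) (fun i => cross (edge i) q) Hx)
    as [t0 [Ht0 H]].
  exists t0. split; [assumption|]. intros t Ht i Hi.
  change (0 <= side i (padd x (pscale t q))). rewrite side_ray. left. apply H; assumption.
Qed.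


Definition improvable (A : nat -> point) (delta : R) : Prop :=
  exists B, parallelogram B /\ lies_in n v B /\
    (forall k, (k < 4)%nat -> dist2 (A k) (B k) < delta) /\ par_area A < par_area B.

Lemma improvable_rot A delta : parallelogram A -> improvable (rot A) delta -> improvable A delta.
Proof.
  intros HA [B [HB [HL [Hd Ha]]]]. exists (rotn 3 B). split; [|split; [|split]].
  - apply parallelogram_rotn, HB.
  - exact (corners_rotn _ 3 B HL).
  - intros k Hk. destruct k as [|[|[|[|k]]]]; [apply (Hd 3%nat) | apply (Hd 0%nat)
      | apply (Hd 1%nat) | apply (Hd 2%nat) | ]; lia.
  - rewrite par_area_rotn, <- (par_area_rot A) by (apply HA || apply HB). exact Ha.
Qed.

Lemma improvable_rotn r A delta :
  parallelogram A -> improvable (rotn r A) delta -> improvable A delta.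
Proof.
  intros HA. induction r as [|r IH]; intros H; [exact H|].
  apply IH, improvable_rot; [apply parallelogram_rotn, HA | exact H].
Qed.

(* [p = A 0 + e (A 0 - A 3)] lies beyond the line [A 0 A 1] as seen from [A 3], so
   translating that side by [t (p - A 1)] moves it away from the side [A 3 A 2]. *)
Lemma par_area_shift01_away A e t :
  0 <= t -> 0 <= e ->
  par_area (shift01 (pscale t (psub (padd (A 0%nat) (pscale e (psub (A 0%nat) (A 3%nat))))
                                    (A 1%nat))) A)
  = (1 + t * e) * par_area A.
Proof.
  intros Ht He. unfold par_area. rewrite shift01_cross.
  match goal with |- Rabs ?X = _ =>
    replace X with ((1 + t * e) * cross (psub (A 1%nat) (A 0%nat)) (psub (A 3%nat) (A 0%nat)))
      by (unfold cross, psub, padd, pscale; simpl; ring) end.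
  rewrite Rabs_mult, (Rabs_pos_eq (1 + t * e)) by nra. reflexivity.
Qed.

Lemma improvable_of_interior_corner A delta :
  parallelogram A -> lies_in n v A -> (forall i, (i < n)%nat -> 0 < side i (A 0%nat)) ->
  0 < delta -> improvable A delta.
Proof.
  intros [H Ha] HL Hint Hd.
  destruct (inP_ray_interior (A 0%nat) (psub (A 0%nat) (A 3%nat)) Hint) as [e [He Hp]].
  set (p := padd (A 0%nat) (pscale e (psub (A 0%nat) (A 3%nat)))).
  assert (Hpin : inP n v p) by (apply Hp; lra).
  set (q := psub p (A 1%nat)).
  destruct (inP_ray_interior (A 0%nat) q Hint) as [t0 [Ht0 Hq]].
  assert (HN : 0 <= dist2 (0, 0) q) by apply sqrt_pos.
  destruct (exists_small_pos (Rmin t0 1) _ delta (Rmin_pos _ _ Ht0 Rlt_0_1) HN Hd)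
    as [t [Ht Hsmall]].
  pose proof (Rmin_l t0 1). pose proof (Rmin_r t0 1).
  exists (shift01 (pscale t q) A). split; [|split; [|split]].
  - split; [apply shift01_sum, H|].
    unfold q, p. rewrite par_area_shift01_away by lra. apply Rmult_lt_0_compat; [nra | exact Ha].
  - intros k Hk. destruct k as [|[|[|[|k]]]]; simpl.
    + apply Hq. lra.
    + apply inP_segment; [apply HL; lia | exact Hpin | lra].
    + apply HL; lia.
    + apply HL; lia.
    + lia.
  - intros k Hk. destruct k as [|[|[|[|k]]]]; simpl; try lia.
    1, 2: rewrite dist2_padd_scale by lra; exact Hsmall.
    all: rewrite dist2_self; exact Hd.
  - unfold q, p. rewrite par_area_shift01_away by lra.
    assert (0 < t * e * par_area A) by (apply Rmult_lt_0_compat; [nra | exact Ha]). lra.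
Qed.

Lemma locally_maximal_inscribed A : locally_maximal n v A -> inscribed n v A.
Proof.
  intros [HA [HL [delta [Hd Hmax]]]] k Hk.
  destruct (classic (on_boundary n v (A k))) as [|Hb]; [assumption | exfalso].
  assert (Hint : forall i, (i < n)%nat -> 0 < side i (rotn k A 0%nat)).
  { intros i Hi. rewrite rotn_corner0 by exact Hk. apply side_pos_interior; auto. }
  destruct (improvable_rotn k A delta HA
              (improvable_of_interior_corner _ delta (parallelogram_rotn k A HA)
                 (corners_rotn _ k A HL) Hint Hd)) as [B [HB [HLB [HdB Ha]]]].
  specialize (Hmax B HB HLB HdB). lra.
Qed.

Lemma side_parallelogram i A :
  padd (A 0%nat) (A 2%nat) = padd (A 1%nat) (A 3%nat) ->
  side i (A 0%nat) + side i (A 2%nat) = side i (A 1%nat) + side i (A 3%nat).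
Proof.
  intros H. rewrite (fourth_corner A H).
  unfold side, cross, psub, padd; simpl. ring.
Qed.

Lemma side_far_corners i F :
  (i < n)%nat -> parallelogram F -> side i (F 0%nat) = 0 -> side i (F 1%nat) = 0 ->
  side i (F 2%nat) <> 0 /\ side i (F 3%nat) <> 0.
Proof.
  intros Hi [H Ha] Z0 Z1.
  assert (Z3 : side i (F 3%nat) <> 0).
  { intros Z3. unfold par_area in Ha.
    rewrite (cross_collinear (edge i)), Rabs_R0 in Ha; [lra | apply edge_neq0, Hi | |].
    - transitivity (side i (F 1%nat) - side i (F 0%nat)); [|lra].
      unfold side, cross, psub; simpl. ring.
    - transitivity (side i (F 3%nat) - side i (F 0%nat)); [|lra].
      unfold side, cross, psub; simpl. ring. }
  split; [|exact Z3].
  pose proof (side_parallelogram i F H). lra.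
Qed.

Lemma no_diagonal_in_edge i A :
  (i < n)%nat -> parallelogram A -> lies_in n v A ->
  ~ (in_edge n v i (A 0%nat) /\ in_edge n v i (A 2%nat)).
Proof.
  intros Hi HA HL [E0 E2]. apply side_in_edge in E0, E2.
  assert (S1 := HL 1%nat ltac:(lia) i Hi). assert (S3 := HL 3%nat ltac:(lia) i Hi).
  change (0 <= side i (A 1%nat)) in S1. change (0 <= side i (A 3%nat)) in S3.
  pose proof (side_parallelogram i A (proj1 HA)).
  assert (Z1 : side i (A 1%nat) = 0) by lra. assert (Z2 : side i (A 2%nat) = 0) by lra.
  apply (side_far_corners i (rot A) Hi (parallelogram_rot A HA) Z1 Z2). exact E0.
Qed.

Definition vertex_edge_pair (i : nat) (x y : point) : Prop :=
  (x = v i /\ in_edge n v i y) \/ (y = v i /\ in_edge n v i x).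

Lemma vertex_edge_pair_cases i x y :
  vertex_edge_pair i x y ->
  (x = v i \/ in_edge n v i x) /\ (y = v i \/ in_edge n v i y).
Proof. unfold vertex_edge_pair. tauto. Qed.

Lemma vertex_edge_pair_inP i x y :
  (i < n)%nat -> vertex_edge_pair i x y -> inP n v x /\ inP n v y.
Proof.
  intros Hi Hv. destruct (vertex_edge_pair_cases i x y Hv) as [Hx Hy].
  split; [destruct Hx as [->|Hx] | destruct Hy as [->|Hy]];
    solve [apply inP_vertex, Hi | apply (inP_in_edge i); assumption].
Qed.

Lemma vertex_edge_pair_on_boundary i x y :
  (i < n)%nat -> vertex_edge_pair i x y -> on_boundary n v x /\ on_boundary n v y.
Proof.
  intros Hi Hv. destruct (vertex_edge_pair_cases i x y Hv) as [Hx Hy].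
  split; [destruct Hx as [->|Hx] | destruct Hy as [->|Hy]];
    solve [left; exists i; auto | right; exists i; auto].
Qed.

Lemma vertex_edge_pair_no_common_edge i x y :
  (i < n)%nat -> vertex_edge_pair i x y ->
  ~ exists m, (m < n)%nat /\ in_edge n v m x /\ in_edge n v m y.
Proof.
  intros Hi Hv [m [Hm [Ex Ey]]].
  destruct Hv as [[-> _]|[-> _]];
    [exact (vertex_not_in_edge m i Hm Hi Ex) | exact (vertex_not_in_edge m i Hm Hi Ey)].
Qed.

Lemma slide_along_edge i A :
  (i < n)%nat -> parallelogram A -> lies_in n v A -> inscribed n v A ->
  in_edge n v i (A 0%nat) -> in_edge n v i (A 1%nat) ->
  exists B, parallelogram B /\ lies_in n v B /\ inscribed n v B /\
    par_area B = par_area A /\ B 2%nat = A 2%nat /\ B 3%nat = A 3%nat /\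
    vertex_edge_pair i (B 0%nat) (B 1%nat).
Proof.
  intros Hi [H Ha] HL HI [a [Hta E0]] [b [Htb E1]].
  set (d := pscale (- Rmin a b) (edge i)).
  assert (Hd : cross (psub (A 1%nat) (A 0%nat)) d = 0).
  { rewrite E0, E1. unfold d, cross, psub, padd, pscale; simpl. ring. }
  assert (Harea : par_area (shift01 d A) = par_area A).
  { unfold par_area. rewrite shift01_cross, Hd, Rminus_0_r. reflexivity. }
  assert (Hab : a <> b).
  { intros <-. unfold par_area in Ha. rewrite E0, E1 in Ha.
    unfold cross, psub, padd, pscale in Ha; simpl in Ha.
    match type of Ha with 0 < Rabs ?X => replace X with 0 in Ha by ring end.
    rewrite Rabs_R0 in Ha. lra. }
  (* the corner with the smaller edge parameter is moved onto the vertex [v i] *)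
  assert (Hv : vertex_edge_pair i (shift01 d A 0%nat) (shift01 d A 1%nat)).
  { unfold d; simpl. rewrite E0, E1.
    destruct (Rle_dec a b) as [Lab|Lab]; [rewrite Rmin_left by lra | rewrite Rmin_right by lra].
    - left. split.
      + apply point_eq; unfold padd, pscale; simpl; ring.
      + exists (b - a). split; [lra|]. apply point_eq; unfold padd, pscale, edge; simpl; ring.
    - right. split.
      + apply point_eq; unfold padd, pscale; simpl; ring.
      + exists (a - b). split; [lra|]. apply point_eq; unfold padd, pscale, edge; simpl; ring. }
  destruct (vertex_edge_pair_inP i _ _ Hi Hv) as [L0 L1].
  destruct (vertex_edge_pair_on_boundary i _ _ Hi Hv) as [I0 I1].
  exists (shift01 d A). split; [split; [apply shift01_sum, H | rewrite Harea; exact Ha]|].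
  split; [|split; [|repeat split; assumption]].
  - intros k Hk. destruct k as [|[|[|[|k]]]]; try assumption; apply HL; lia.
  - intros k Hk. destruct k as [|[|[|[|k]]]]; try assumption; apply HI; lia.
Qed.

Lemma not_slidable_of_vertex_edge_pair i F :
  (i < n)%nat -> parallelogram F -> vertex_edge_pair i (F 0%nat) (F 1%nat) ->
  ~ (exists m, (m < n)%nat /\ in_edge n v m (F 2%nat) /\ in_edge n v m (F 3%nat)) ->
  ~ slidable n v F.
Proof.
  intros Hi HF Hv Htop [m [p [q [Hm [Hp [Hq [Hpq [Ep Eq]]]]]]]].
  destruct (vertex_edge_pair_cases i _ _ Hv) as [C0 C1].
  assert (Hline : forall c, (c < 2)%nat -> F c = v i \/ in_edge n v i (F c)).
  { intros c Hc. destruct c as [|[|c]]; [exact C0 | exact C1 | lia]. }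
  assert (Hbot : forall c, (c < 2)%nat -> in_edge n v m (F c) -> m = i).
  { intros c Hc Ec. destruct (Hline c Hc) as [Vc|Ic].
    - rewrite Vc in Ec. destruct (vertex_not_in_edge m i Hm Hi Ec).
    - exact (in_edge_unique m i _ Hm Hi Ec Ic). }
  assert (Hoff : forall c, (2 <= c < 4)%nat -> ~ in_edge n v i (F c)).
  { assert (Z : forall c, (c < 2)%nat -> side i (F c) = 0).
    { intros c Hc. destruct (Hline c Hc) as [->|Ic];
        [apply side_vertex | apply side_in_edge, Ic]. }
    destruct (side_far_corners i F Hi HF (Z 0%nat ltac:(lia)) (Z 1%nat ltac:(lia))).
    intros c Hc Ec. apply side_in_edge in Ec.
    destruct c as [|[|[|[|c]]]]; lia || contradiction. }
  destruct (Nat.lt_ge_cases p 2) as [Lp|Lp]; destruct (Nat.lt_ge_cases q 2) as [Lq|Lq].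
  - apply (vertex_edge_pair_no_common_edge i _ _ Hi Hv). exists m.
    destruct p as [|[|p]]; destruct q as [|[|q]]; try lia; auto.
  - rewrite (Hbot p Lp Ep) in Eq. exact (Hoff q ltac:(lia) Eq).
  - rewrite (Hbot q Lq Eq) in Ep. exact (Hoff p ltac:(lia) Ep).
  - apply Htop. exists m.
    destruct p as [|[|[|[|p]]]]; destruct q as [|[|[|[|q]]]]; try lia; auto.
Qed.

Definition nonslidable_with_area (a : R) : Prop :=
  exists B, parallelogram B /\ lies_in n v B /\ inscribed n v B /\
    ~ slidable n v B /\ par_area B = a.

Lemma nonslidable_of_edge_pair i A :
  (i < n)%nat -> parallelogram A -> lies_in n v A -> inscribed n v A ->
  in_edge n v i (A 0%nat) -> in_edge n v i (A 1%nat) ->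
  nonslidable_with_area (par_area A).
Proof.
  intros Hi HA HL HI E0 E1.
  destruct (slide_along_edge i A Hi HA HL HI E0 E1)
    as [B [HB [HLB [HIB [HaB [B2 [B3 Hv]]]]]]].
  destruct (classic (exists j, (j < n)%nat /\ in_edge n v j (A 2%nat) /\ in_edge n v j (A 3%nat)))
    as [[j [Hj [E2 E3]]]|Htop].
  - destruct (slide_along_edge j (rotn 2 B) Hj (parallelogram_rotn 2 B HB)
                (corners_rotn _ 2 B HLB) (corners_rotn _ 2 B HIB))
      as [C [HC [HLC [HIC [HaC [C2 [C3 Hw]]]]]]]; [simpl; congruence .. |].
    exists (rotn 2 C). split; [|split; [|split; [|split]]].
    + apply parallelogram_rotn, HC.
    + exact (corners_rotn _ 2 C HLC).
    + exact (corners_rotn _ 2 C HIC).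
    + apply (not_slidable_of_vertex_edge_pair i); [assumption | apply parallelogram_rotn, HC | |].
      * simpl. rewrite C2, C3. exact Hv.
      * exact (vertex_edge_pair_no_common_edge j _ _ Hj Hw).
    + rewrite par_area_rotn, HaC, par_area_rotn by assumption. exact HaB.
  - exists B. do 3 (split; [assumption|]). split; [|exact HaB].
    apply (not_slidable_of_vertex_edge_pair i); try assumption. rewrite B2, B3. exact Htop.
Qed.

Lemma slidable_edge_pair A :
  parallelogram A -> lies_in n v A -> slidable n v A ->
  exists i r, (i < n)%nat /\ in_edge n v i (rotn r A 0%nat) /\ in_edge n v i (rotn r A 1%nat).
Proof.
  intros HA HL [i [j [k [Hi [Hj [Hk [Hjk [Ej Ek]]]]]]]]. exists i.
  pose proof (no_diagonal_in_edge i A Hi HA HL) as D02.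
  pose proof (no_diagonal_in_edge i (rot A) Hi (parallelogram_rot A HA)
                (corners_rotn _ 1 A HL)) as D13.
  simpl in D02, D13.
  destruct j as [|[|[|[|j]]]]; destruct k as [|[|[|[|k]]]]; try lia;
    first [ exfalso; tauto
          | exists 0%nat; split; [|split]; assumption
          | exists 1%nat; split; [|split]; assumption
          | exists 2%nat; split; [|split]; assumption
          | exists 3%nat; split; [|split]; assumption ].
Qed.

Lemma inscribed_slidable_nonslidable A :
  parallelogram A -> lies_in n v A -> inscribed n v A -> slidable n v A ->
  nonslidable_with_area (par_area A).
Proof.
  intros HA HL HI HS.
  destruct (slidable_edge_pair A HA HL HS) as [i [r [Hi [E0 E1]]]].
  rewrite <- (par_area_rotn r A HA).
  apply (nonslidable_of_edge_pair i); try assumption.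
  - apply parallelogram_rotn, HA.
  - exact (corners_rotn _ r A HL).
  - exact (corners_rotn _ r A HI).
Qed.

End Polygon.

Theorem lemma2 (n : nat) (v : nat -> point) (hP : convex_polygon n v) :
  (forall A : nat -> point, locally_maximal n v A -> inscribed n v A) /\
  (forall A : nat -> point,
     parallelogram A -> lies_in n v A -> inscribed n v A -> slidable n v A ->
     exists B : nat -> point,
       parallelogram B /\ lies_in n v B /\ inscribed n v B /\
       ~ slidable n v B /\ par_area B = par_area A).
Proof.
  split.
  - exact (locally_maximal_inscribed n v hP).
  - exact (inscribed_slidable_nonslidable n v hP).
Qed.
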